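(* For every strategy profile $s$ with $S_0(s)\vee S_1(s)$: if $\mathsf{SBcAes}(s)$ then $\mathsf{SPE}(s)$.
   Context: Let $P=\{A,B\}$ and $\mathrm{Choice}=\{d,r\}$; a payoff function is $f:P\to\mathbb{R}$. Strategy profiles are elements of the final coalgebra of $X\mapsto\mathbb{R}^P+P\times\mathrm{Choice}\times X\times X$ (finite or infinite trees $\langle f\rangle$ or $\langle p,c,s_d,s_r\rangle$, equality being bisimilarity). The payoff $\widehat{s}$ is the partial function given by $\widehat{\langle f\rangle}=f$, $\widehat{\langle p,d,s_d,s_r\rangle}=\widehat{s_d}$, $\widehat{\langle p,r,s_d,s_r\rangle}=\widehat{s_r}$. Convergence $\downarrow$: least predicate with $\downarrow(s)$ iff $s=\langle f\rangle$, or $s=\langle p,d,s_d,s_r\rangle\wedge\downarrow(s_d)$, or $s=\langle p,r,s_d,s_r\rangle\wedge\downarrow(s_r)$. Strong convergence $\Downarrow$: greatest predicate with $\Downarrow(s)$ iff $s=\langle f\rangle$, or $s=\langle p,c,s_d,s_r\rangle$ with $\downarrow(s),\Downarrow(s_d),\Downarrow(s_r)$. For a predicate $\Phi$, $\Box\Phi$ is the greatest predicate such that $\Box\Phi(s)$ iff $\Phi(s)$ and, whenever $s=\langle p,c,s_d,s_r\rangle$, $\Box\Phi(s_d)$ and $\Box\Phi(s_r)$. $\mathsf{PE}(s)$ holds iff $\Downarrow(s)$ and (if $s=\langle p,d,s_d,s_r\rangle$ then $\widehat{s_d}(p)\ge\widehat{s_r}(p)$) and (if $s=\langle p,r,s_d,s_r\rangle$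 then $\widehat{s_r}(p)\ge\widehat{s_d}(p)$); $\mathsf{SPE}=\Box\,\mathsf{PE}$. Let $f_{0,1}=(A\mapsto0,B\mapsto1)$, $f_{1,0}=(A\mapsto1,B\mapsto0)$. $S_0,S_1$ are the greatest predicates with $S_0(s)$ iff $s=\langle A,c,\langle f_{0,1}\rangle,s'\rangle$ with $S_1(s')$, and $S_1(s)$ iff $s=\langle B,c,\langle f_{1,0}\rangle,s'\rangle$ with $S_0(s')$. $\mathsf{BcAes}$ (''B continues and A eventually stops'') is the least predicate such that $\mathsf{BcAes}(s)$ holds iff: whenever $s=\langle p,c,\langle f\rangle,s'\rangle$, then ($p=B$, $f=f_{1,0}$, $c=r$, $\mathsf{BcAes}(s')$) or ($p=A$, $f=f_{0,1}$, and ($c=d$ or $\mathsf{BcAes}(s')$)). $\mathsf{SBcAes}=\Box\,\mathsf{BcAes}$. *)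

From Stdlib Require Import Reals.
Open Scope R_scope.

Inductive Agent : Type := A | B.
Inductive Choice : Type := d | r.

CoInductive Strat : Type :=
| Leaf : (Agent -> R) -> Strat
| Node : Agent -> Choice -> Strat -> Strat -> Strat.

(* Bisimilarity (the intended equality on strategy profiles) *)
CoInductive bisim : Strat -> Strat -> Prop :=
| bisim_leaf f g : (forall a, f a = g a) -> bisim (Leaf f) (Leaf g)
| bisim_node p c sd sr sd' sr' :
    bisim sd sd' -> bisim sr sr' -> bisim (Node p c sd sr) (Node p c sd' sr').

(* The partial payoff function s^ , given by its graph *)
Inductive payoff : Strat -> (Agent -> R) -> Prop :=
| payoff_leaf f : payoff (Leaf f) f
| payoff_d p sd sr f : payoff sd f -> payoff (Node p d sd sr) f
| payoff_r p sd sr f : payoff sr f -> payoff (Node p r sd sr) f.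

Inductive conv : Strat -> Prop :=
| conv_leaf f : conv (Leaf f)
| conv_d p sd sr : conv sd -> conv (Node p d sd sr)
| conv_r p sd sr : conv sr -> conv (Node p r sd sr).

CoInductive sconv : Strat -> Prop :=
| sconv_leaf f : sconv (Leaf f)
| sconv_node p c sd sr :
    conv (Node p c sd sr) -> sconv sd -> sconv sr -> sconv (Node p c sd sr).

CoInductive Always (Phi : Strat -> Prop) : Strat -> Prop :=
| always_leaf f : Phi (Leaf f) -> Always Phi (Leaf f)
| always_node p c sd sr :
    Phi (Node p c sd sr) -> Always Phi sd -> Always Phi sr ->
    Always Phi (Node p c sd sr).

(* Partial payoff comparison: s1^(p) >= s2^(p) (both payoffs are defined
   whenever the profile strongly converges). *)
Definition PE (s : Strat) : Prop :=
  sconv s /\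
  match s with
  | Leaf _ => True
  | Node p d sd sr =>
      forall fd fr, payoff sd fd -> payoff sr fr -> fd p >= fr p
  | Node p r sd sr =>
      forall fd fr, payoff sd fd -> payoff sr fr -> fr p >= fd p
  end.

Definition SPE : Strat -> Prop := Always PE.

Definition f01 : Agent -> R := fun a => match a with A => 0 | B => 1 end.
Definition f10 : Agent -> R := fun a => match a with A => 1 | B => 0 end.

CoInductive S0 : Strat -> Prop :=
| S0_intro c f s' : (forall a, f a = f01 a) -> S1 s' -> S0 (Node A c (Leaf f) s')
with S1 : Strat -> Prop :=
| S1_intro c f s' : (forall a, f a = f10 a) -> S0 s' -> S1 (Node B c (Leaf f) s').

(* "B continues and A eventually stops": least predicate *)
Inductive BcAes (s : Strat) : Prop :=
| BcAes_intro :
    (forall p c f s', s = Node p c (Leaf f) s' ->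
       (p = B /\ (forall a, f a = f10 a) /\ c = r /\ BcAes s')
       \/ (p = A /\ (forall a, f a = f01 a) /\ (c = d \/ BcAes s'))) ->
    BcAes s.

Definition SBcAes : Strat -> Prop := Always BcAes.

From Stdlib Require Import Reals Lra.
Open Scope R_scope.

(* Under SBcAes every alternating subgame ends with A stopping, so its payoff is
   (A: 0, B: 1), and it converges because A eventually stops.  At a node of B,
   who continues, B thus gets 1 instead of the 0 of stopping; at a node of A,
   stopping and continuing both give A the payoff 0.  Hence every subgame is a
   Nash equilibrium. *)

Definition alternating (s : Strat) : Prop := S0 s \/ S1 s.

Lemma alternating_spine s : alternating s ->
  exists p c f t, s = Node p c (Leaf f) t /\ alternating t.
Proof.
  intros [H|H]; destruct H; do 4 eexists; split; try reflexivity; red; auto.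
Qed.

Lemma BcAes_node_leaf p c f t : BcAes (Node p c (Leaf f) t) ->
  (p = B /\ (forall a, f a = f10 a) /\ c = r /\ BcAes t)
  \/ (p = A /\ (forall a, f a = f01 a) /\ (c = d \/ BcAes t)).
Proof. intros [h]. exact (h p c f t eq_refl). Qed.

Lemma Always_here (Phi : Strat -> Prop) s : Always Phi s -> Phi s.
Proof. now destruct 1. Qed.

Lemma Always_children (Phi : Strat -> Prop) p c sd sr :
  Always Phi (Node p c sd sr) -> Always Phi sd /\ Always Phi sr.
Proof. inversion 1; auto. Qed.

Lemma Always_coind (Phi Inv : Strat -> Prop) :
  (forall s, Inv s -> Phi s) ->
  (forall p c sd sr, Inv (Node p c sd sr) -> Inv sd /\ Inv sr) ->
  forall s, Inv s -> Always Phi s.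
Proof.
  intros HPhi Hstep. cofix CH. intros [f | p c sd sr] Hs.
  - constructor. exact (HPhi _ Hs).
  - destruct (Hstep _ _ _ _ Hs) as [Hd Hr].
    constructor; [exact (HPhi _ Hs) | exact (CH _ Hd) | exact (CH _ Hr)].
Qed.

Fixpoint BcAes_alternating_conv s (H : BcAes s) {struct H} :
  alternating s -> conv s.
Proof.
  intros Halt. destruct (alternating_spine s Halt) as (p & c & f & t & -> & Ht).
  destruct H as [h].
  destruct (h p c f t eq_refl) as [(_ & _ & -> & Hb) | (_ & _ & [-> | Hb])].
  - exact (conv_r _ _ _ (BcAes_alternating_conv t Hb Ht)).
  - exact (conv_d _ _ _ (conv_leaf f)).
  - destruct c; [exact (conv_d _ _ _ (conv_leaf f)) |].
    exact (conv_r _ _ _ (BcAes_alternating_conv t Hb Ht)).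
Qed.

Lemma SBcAes_alternating_sconv : forall s,
  SBcAes s -> alternating s -> sconv s.
Proof.
  cofix CH. intros s HA Halt.
  destruct (alternating_spine s Halt) as (p & c & f & t & -> & Ht).
  constructor.
  - exact (BcAes_alternating_conv _ (Always_here _ _ HA) Halt).
  - constructor.
  - exact (CH t (proj2 (Always_children _ _ _ _ _ HA)) Ht).
Qed.

(* Continuing can only end at a stop of A, since B never stops. *)
Lemma SBcAes_alternating_payoff s g : payoff s g ->
  SBcAes s -> alternating s -> forall a, g a = f01 a.
Proof.
  induction 1 as [f | p sd sr g Hg _ | p sd sr g _ IH]; intros HA Halt;
    destruct (alternating_spine _ Halt) as (p' & c & f' & t & E & Ht);
    try discriminate E; injection E as Ep Ec Esd Esr; subst.
  - destruct (BcAes_node_leaf _ _ _ _ (Always_here _ _ HA))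
      as [(_ & _ & Hc & _) | (_ & Hf & _)]; [discriminate |].
    inversion Hg; subst; exact Hf.
  - exact (IH (proj2 (Always_children _ _ _ _ _ HA)) Ht).
Qed.

Lemma SBcAes_alternating_PE s : SBcAes s -> alternating s -> PE s.
Proof.
  intros HA Halt. split; [exact (SBcAes_alternating_sconv s HA Halt) |].
  destruct (alternating_spine s Halt) as (p & c & f & t & -> & Ht).
  assert (Hpay : forall g, payoff t g -> forall a, g a = f01 a)
    by (intros g Hg; exact (SBcAes_alternating_payoff t g Hg
                              (proj2 (Always_children _ _ _ _ _ HA)) Ht)).
  destruct (BcAes_node_leaf _ _ _ _ (Always_here _ _ HA))
    as [(-> & Hf & -> & _) | (-> & Hf & _)];
    [| destruct c]; intros fd fr Hd Hr; inversion Hd; subst;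
    rewrite Hf, (Hpay fr Hr); simpl; lra.
Qed.

Theorem mainTheorem10 : forall s : Strat,
  (S0 s \/ S1 s) -> SBcAes s -> SPE s.
Proof.
  intros s Halt HA.
  apply (Always_coind PE
           (fun s => SBcAes s /\ (alternating s \/ exists f, s = Leaf f))).
  - intros s' [HA' [Halt' | [f ->]]].
    + exact (SBcAes_alternating_PE s' HA' Halt').
    + split; [constructor | exact I].
  - intros p c sd sr [HA' [Halt' | [f E]]]; [| discriminate].
    destruct (alternating_spine _ Halt') as (p' & c' & f & t & E & Ht).
    injection E as -> -> -> ->.
    destruct (Always_children _ _ _ _ _ HA') as [Hd Hr].
    split; split; eauto.
  - split; [exact HA | left; exact Halt].
Qed.
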